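(* Let $K$ be a field with at least $4$ elements and $S$ a smooth cubic surface over $K$. Let $\ell$ be a $K$-line contained in $S$, and let $P\in\ell(K)$ be a point that lies on no other line contained in $S$. Then $\ell(K)\subseteq\Gamma_P(K)\subseteq\mathrm{Span}(P)$.
   Context: A smooth cubic surface $S$ over $K$ is a nonsingular surface in $\mathbb{P}^3$ defined by a homogeneous cubic $F$ over $K$. A $K$-line is a line in $\mathbb{P}^3$ defined over $K$; lines ''on $S$''/''contained in $S$'' are lines over $\overline{K}$. For $P\in S(\overline{K})$, $\Pi_P$ is the tangent plane to $S$ at $P$ (given by $\nabla F(P)\cdot x=0$) and $\Gamma_P$ is the plane cubic curve $S\cap\Pi_P$. For a line $\ell\not\subset S$, $\ell\cdot S=P+Q+R$ with multiplicity. For $B\subseteq S(K)$ define $B_0=B$ and $B_{n+1}$ as the set of $R\in S(K)$ such that either $R\in B_n$ or there exist $P,Q\in B_n$ and a $K$-line $\ell\not\subset S$ with $\ell\cdot S=P+Q+R$; $\mathrm{Span}(B)=\bigcup_n B_n$, and $\mathrm{Span}(P)=\mathrm{Span}(\{P\})$. *)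

From HB Require Import structures.
From mathcomp Require Import all_boot all_order all_algebra all_field.
Set Implicit Arguments. Unset Strict Implicit. Unset Printing Implicit Defensive.
Import Order.TTheory GRing.Theory Num.Theory.
Local Open Scope ring_scope.

(* A homogeneous cubic form in x_0..x_3 over R, given by a coefficient
   array: F(x) = sum_{i,j,k} c i j k * x_i x_j x_k.  Every cubic form
   arises this way (representation not unique, but evaluation and
   formal derivatives are well defined). *)
Definition cubic (R : Type) := 'I_4 -> 'I_4 -> 'I_4 -> R.

Definition map_cubic (R S : Type) (f : R -> S) (c : cubic R) : cubic S :=
  fun i j k => f (c i j k).

Definition evalF (R : comNzRingType) (c : cubic R) (x : 'rV[R]_4) : R :=
  \sum_(i < 4) \sum_(j < 4) \sum_(k < 4) c i j k * x 0 i * x 0 j * x 0 k.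

Definition dF (R : comNzRingType) (c : cubic R) (m : 'I_4) (x : 'rV[R]_4) : R :=
  \sum_(i < 4) \sum_(j < 4) \sum_(k < 4) c i j k *
    ((i == m)%:R * x 0 j * x 0 k + (j == m)%:R * x 0 i * x 0 k
     + (k == m)%:R * x 0 i * x 0 j).

Definition smooth_cubic (L : fieldType) (c : cubic L) : Prop :=
  forall x : 'rV[L]_4, x != 0 -> evalF c x = 0 -> exists m, dF c m x != 0.

(* A line of P^3 over a field is the row space of a rank-2 2x4 matrix;
   a point x lies on it iff (x <= M)%MS. *)
Definition is_line (F : fieldType) (M : 'M[F]_(2,4)) : Prop := \rank M = 2%N.

Definition line_in_surface (F : fieldType) (c : cubic F) (M : 'M[F]_(2,4)) : Prop :=
  forall x : 'rV[F]_4, (x <= M)%MS -> evalF c x = 0.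

(* Restriction of F to the line with basis rows u = M_0, v = M_1, as the
   dehomogenised binary cubic form f(X,1) = F(X u + v) in {poly K}.
   (A binary cubic form is determined by this polynomial.) *)
Definition line_form (K : fieldType) (c : cubic K) (M : 'M[K]_(2,4)) : {poly K} :=
  evalF (map_cubic polyC c) (\row_i ('X * (M ord0 i)%:P + (M ord_max i)%:P)).

(* l . S = P + Q + R for the K-line M not contained in S, with multiplicity:
   writing P = s1 u + t1 v etc., F(s u + t v) = lam * prod (t_i s - s_i t)
   with lam <> 0 (dehomogenised at t = 1). *)
Definition line_cuts (K : fieldType) (c : cubic K) (M : 'M[K]_(2,4))
  (p q r : 'rV[K]_4) : Prop :=
  is_line M /\ p != 0 /\ q != 0 /\ r != 0 /\
  exists (s1 t1 s2 t2 s3 t3 lam : K),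
    [/\ p = s1 *: row ord0 M + t1 *: row ord_max M,
        q = s2 *: row ord0 M + t2 *: row ord_max M,
        r = s3 *: row ord0 M + t3 *: row ord_max M,
        lam != 0 &
        line_form c M =
          lam *: ((t1 *: 'X - s1%:P) * (t2 *: 'X - s2%:P) * (t3 *: 'X - s3%:P))].

(* Span(B) for B a set of K-points (given by representative vectors):
   the least set containing B and closed under third intersection points. *)
Inductive in_Span (K : fieldType) (c : cubic K) (B : 'rV[K]_4 -> Prop)
  : 'rV[K]_4 -> Prop :=
| Span_base : forall x, B x -> in_Span c B x
| Span_step : forall (p q r : 'rV[K]_4) (M : 'M[K]_(2,4)),
    in_Span c B p -> in_Span c B q -> line_cuts c M p q r -> in_Span c B r.

(* The projective point P, as a set of representatives. *)
Definition proj_point (K : fieldType) (P : 'rV[K]_4) : 'rV[K]_4 -> Prop :=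
  fun x => x != 0 /\ exists a : K, x = a *: P.

Definition Gamma_pt (K : fieldType) (c : cubic K) (P x : 'rV[K]_4) : Prop :=
  [/\ x != 0, evalF c x = 0 & \sum_(m < 4) dF c m P * x 0 m = 0].

From HB Require Import structures.
From mathcomp Require Import all_boot all_order all_algebra all_field.
From mathcomp Require Import ring.
Import GRing.Theory.
Local Open Scope ring_scope.
Set Implicit Arguments. Unset Strict Implicit. Unset Printing Implicit Defensive.

(* Write F for the cubic form, B(x,y) = grad F(x) . y for its first polar
   and T for its full polarisation, so that
     F(a x + b y) = a^3 F(x) + a^2 b B(x,y) + a b^2 B(y,x) + b^3 F(y).
   The line through two points x, y of S lies on S iff B(x,y) = B(y,x) = 0;
   otherwise it meets S in x, y and an explicit third point (chord), and in
   x + x + y when B(x,y) = 0 (tangent).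

   For the theorem itself: a point x of
   Gamma_P off the line l gives a tangent line Px, which cannot lie on S
   since P is on no other line; so x is in Span(P).  Fixing one such point
   y (it exists by smoothness at P), a point x of l with B(x,y) != 0 is
   the third point of a chord through y and another point of Gamma_P off l.  The remaining points of l are
   obtained by the plane construction.  Smoothness of S (checked over the
   algebraic closure L) guarantees that the polars that must not vanish
   indeed do not. *)

Section PolarForms.
Variable R : comNzRingType.
Implicit Types (c : cubic R) (x y z w : 'rV[R]_4).

(* The first polar of F: polar c x y = grad F(x) . y, quadratic in x and
   linear in y; it is the coefficient of a^2 b in F(a x + b y). *)
Definition polar c x y : R := \sum_(m < 4) dF c m x * y 0 m.

(* The full polarisation of F, a symmetric trilinear form; it is the
   coefficient of a b s in F(a x + b y + s z). *)
Definition polar3 c x y z : R :=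
  \sum_(i < 4) \sum_(j < 4) \sum_(k < 4) c i j k *
   (x 0 i * y 0 j * z 0 k + x 0 i * z 0 j * y 0 k + y 0 i * x 0 j * z 0 k
  + y 0 i * z 0 j * x 0 k + z 0 i * x 0 j * y 0 k + z 0 i * y 0 j * x 0 k).

Lemma sum_kronecker (F : 'I_4 -> R) (i : 'I_4) :
  \sum_(m < 4) (i == m)%:R * F m = F i.
Proof.
rewrite (bigD1 i) //= eqxx mul1r big1 ?addr0 // => m /negbTE.
by rewrite eq_sym => ->; rewrite mul0r.
Qed.

Lemma polarE c x y : polar c x y =
  \sum_(i < 4) \sum_(j < 4) \sum_(k < 4) c i j k *
   (y 0 i * x 0 j * x 0 k + x 0 i * y 0 j * x 0 k + x 0 i * x 0 j * y 0 k).
Proof.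
rewrite /polar /dF.
under eq_bigr => m _ do rewrite mulr_suml.
rewrite exchange_big; apply: eq_bigr => i _.
under eq_bigr => m _ do rewrite mulr_suml.
rewrite exchange_big; apply: eq_bigr => j _.
under eq_bigr => m _ do rewrite mulr_suml.
rewrite exchange_big; apply: eq_bigr => k _.
have E (m : 'I_4) : c i j k * ((i == m)%:R * x 0 j * x 0 k
     + (j == m)%:R * x 0 i * x 0 k + (k == m)%:R * x 0 i * x 0 j) * y 0 m =
   (i == m)%:R * (c i j k * x 0 j * x 0 k * y 0 m) +
   (j == m)%:R * (c i j k * x 0 i * x 0 k * y 0 m) +
   (k == m)%:R * (c i j k * x 0 i * x 0 j * y 0 m) by ring.
under eq_bigr => m _ do rewrite E.
rewrite !big_split /= !sum_kronecker; ring.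
Qed.

(* Identities between the forms reduce to termwise ring identities under
   the triple sum over the coefficients. *)
Local Ltac termwise :=
  rewrite ?mulr_sumr -?big_split /=; apply: eq_bigr => ? _;
  rewrite ?mulr_sumr -?big_split /=; apply: eq_bigr => ? _;
  rewrite ?mulr_sumr -?big_split /=; apply: eq_bigr => ? _; rewrite ?mxE; ring.

Lemma evalF_comb3 c x y z a b s : evalF c (a *: x + b *: y + s *: z) =
  a^+3 * evalF c x + b^+3 * evalF c y + s^+3 * evalF c z
  + a^+2*b * polar c x y + a*b^+2 * polar c y x + a^+2*s * polar c x z
  + a*s^+2 * polar c z x + b^+2*s * polar c y z + b*s^+2 * polar c z y
  + a*b*s * polar3 c x y z.
Proof. rewrite /evalF !polarE /polar3; termwise. Qed.

Lemma evalF_comb2 c x y a b : evalF c (a *: x + b *: y) =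
  a^+3 * evalF c x + a^+2*b * polar c x y + a*b^+2 * polar c y x
  + b^+3 * evalF c y.
Proof. rewrite /evalF !polarE; termwise. Qed.

Lemma polar_comb3 c x y z w a b s : polar c (a *: x + b *: y + s *: z) w =
  a^+2 * polar c x w + b^+2 * polar c y w + s^+2 * polar c z w
  + a*b * polar3 c x y w + a*s * polar3 c x z w + b*s * polar3 c y z w.
Proof. rewrite !polarE /polar3; termwise. Qed.

Lemma polar_comb2 c x y w a b : polar c (a *: x + b *: y) w =
  a^+2 * polar c x w + a*b * polar3 c x y w + b^+2 * polar c y w.
Proof. rewrite !polarE /polar3; termwise. Qed.

Lemma polar_linear c x y z a b :
  polar c x (a *: y + b *: z) = a * polar c x y + b * polar c x z.
Proof. rewrite !polarE; termwise. Qed.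

Lemma polar_linear3 c x y z w a b s : polar c x (a *: y + b *: z + s *: w) =
  a * polar c x y + b * polar c x z + s * polar c x w.
Proof. rewrite !polarE; termwise. Qed.

Lemma polar3_linear1 c x y z w a b :
  polar3 c (a *: z + b *: w) x y = a * polar3 c z x y + b * polar3 c w x y.
Proof. rewrite /polar3; termwise. Qed.

Lemma polar3_linear3 c x y z w a b :
  polar3 c x y (a *: z + b *: w) = a * polar3 c x y z + b * polar3 c x y w.
Proof. rewrite /polar3; termwise. Qed.

Lemma polar3C12 c x y z : polar3 c x y z = polar3 c y x z.
Proof. rewrite /polar3; termwise. Qed.

Lemma polar3C23 c x y z : polar3 c x y z = polar3 c x z y.
Proof. rewrite /polar3; termwise. Qed.

Lemma polar3_diag c x y : polar3 c x x y = 2 * polar c x y.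
Proof. rewrite /polar3 polarE; termwise. Qed.

Lemma polar_diag c x : polar c x x = 3 * evalF c x.
Proof. rewrite /evalF polarE; termwise. Qed.

End PolarForms.

Section MapForms.
Variables (R S : comNzRingType) (f : {rmorphism R -> S}).
Implicit Types (c : cubic R) (x y z : 'rV[R]_4).

Lemma evalF_map c x : evalF (map_cubic f c) (map_mx f x) = f (evalF c x).
Proof.
rewrite /evalF rmorph_sum; apply: eq_bigr => i _; rewrite rmorph_sum.
apply: eq_bigr => j _; rewrite rmorph_sum; apply: eq_bigr => k _.
by rewrite !mxE /map_cubic !rmorphM.
Qed.

Lemma polar_map c x y :
  polar (map_cubic f c) (map_mx f x) (map_mx f y) = f (polar c x y).
Proof.
rewrite !polarE rmorph_sum; apply: eq_bigr => i _; rewrite rmorph_sum.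
apply: eq_bigr => j _; rewrite rmorph_sum; apply: eq_bigr => k _.
by rewrite !mxE /map_cubic !(rmorphM, rmorphD).
Qed.

Lemma polar3_map c x y z : polar3 (map_cubic f c) (map_mx f x) (map_mx f y)
  (map_mx f z) = f (polar3 c x y z).
Proof.
rewrite /polar3 rmorph_sum; apply: eq_bigr => i _; rewrite rmorph_sum.
apply: eq_bigr => j _; rewrite rmorph_sum; apply: eq_bigr => k _.
by rewrite !mxE /map_cubic !(rmorphM, rmorphD).
Qed.

Lemma dF_map c m x : dF (map_cubic f c) m (map_mx f x) = f (dF c m x).
Proof.
rewrite /dF rmorph_sum; apply: eq_bigr => i _; rewrite rmorph_sum.
apply: eq_bigr => j _; rewrite rmorph_sum; apply: eq_bigr => k _.
by rewrite !mxE /map_cubic !(rmorphM, rmorphD, rmorph_nat).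
Qed.

End MapForms.

Section LinearAlgebra.
Variable F : fieldType.
Implicit Types (u v w x y z : 'rV[F]_4).

Definition free2 u v := forall a b, a *: u + b *: v = 0 -> a = 0 /\ b = 0.
Definition free3 u v w := forall a b c,
  a *: u + b *: v + c *: w = 0 -> [/\ a = 0, b = 0 & c = 0].
Definition free4 u v w z := forall a b c d,
  a *: u + b *: v + c *: w + d *: z = 0 -> [/\ a = 0, b = 0, c = 0 & d = 0].

Definition matL n (s : seq 'rV[F]_4) : 'M[F]_(n, 4) :=
  \matrix_(i < n, j < 4) (nth 0 s i) 0 j.
Definition lin2 u v : 'M[F]_(2, 4) := matL 2 [:: u; v].

Lemma row_matL n s (i : 'I_n) : row i (matL n s) = nth 0 s i.
Proof. by apply/rowP => j; rewrite !mxE. Qed.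

Lemma mul_matL n s (D : 'rV_n) :
  D *m matL n s = \sum_(i < n) D 0 i *: nth 0 s i.
Proof. by rewrite mulmx_sum_row; apply: eq_bigr => i _; rewrite row_matL. Qed.

Lemma lin2_0 u v : row ord0 (lin2 u v) = u.
Proof. exact: row_matL. Qed.

Lemma lin2_1 u v : row ord_max (lin2 u v) = v.
Proof. exact: row_matL. Qed.

Lemma sub_lin2 x u v : (x <= lin2 u v)%MS -> exists a b, x = a *: u + b *: v.
Proof.
case/submxP => D ->; rewrite mul_matL !big_ord_recr big_ord0 /= add0r.
by eexists; eexists.
Qed.

Lemma row_free_kernel m n (M : 'M[F]_(m, n)) :
  (forall D : 'rV_m, D *m M = 0 -> D = 0) -> row_free M.
Proof.
move=> H; rewrite -kermx_eq0; apply/eqP/row_matrixP => i.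
by rewrite row0; apply: H; rewrite -row_mul mulmx_ker row0.
Qed.

Lemma free2_row_free u v : free2 u v -> row_free (lin2 u v).
Proof.
move=> H; apply: row_free_kernel => D.
rewrite mul_matL !big_ord_recr big_ord0 /= add0r => /H [h0 h1].
apply/rowP => -[[|[|//]] Hi]; rewrite mxE; [rewrite -h0 | rewrite -h1];
  congr (D _ _); exact: val_inj.
Qed.

Lemma free2_line u v : free2 u v -> is_line (lin2 u v).
Proof. by move/free2_row_free/eqP. Qed.

Lemma free3_row_free u v w : free3 u v w -> row_free (matL 3 [:: u; v; w]).
Proof.
move=> H; apply: row_free_kernel => D.
rewrite mul_matL !big_ord_recr big_ord0 /= add0r => /H [h0 h1 h2].
apply/rowP => -[[|[|[|//]]] Hi]; rewrite mxE;
  [rewrite -h0 | rewrite -h1 | rewrite -h2]; congr (D _ _); exact: val_inj.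
Qed.

Lemma free4P u v w z : row_free (matL 4 [:: u; v; w; z]) <-> free4 u v w z.
Proof.
split=> [Hf a b c d H | H].
  pose D : 'rV[F]_4 := \row_i (nth 0 [:: a; b; c; d] i).
  have D0 : D = 0.
    apply/eqP; rewrite -(mulmx_free_eq0 _ Hf); apply/eqP.
    by rewrite mul_matL !big_ord_recr big_ord0 /= !mxE /= add0r -H.
  have E (i : 'I_4) : D 0 i = 0 by rewrite D0 mxE.
  by move: (E 0) (E 1) (E 2) (E 3); rewrite !mxE.
apply: row_free_kernel => D.
rewrite mul_matL !big_ord_recr big_ord0 /= add0r => /H [h0 h1 h2 h3].
apply/rowP => -[[|[|[|[|//]]]] Hi]; rewrite mxE;
  [rewrite -h0 | rewrite -h1 | rewrite -h2 | rewrite -h3];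
  congr (D _ _); exact: val_inj.
Qed.

Lemma free4_swap u v w z : free4 u v w z -> free4 u v z w.
Proof.
move=> H a b c d E; have [] := H a b d c; last by [].
by rewrite -E addrAC.
Qed.

Lemma extend_free n s : size s = n -> (n < 4)%N -> row_free (matL n s) ->
  exists z, row_free (matL n.+1 (rcons s z)).
Proof.
move=> Hs Hn Hf.
have [i Hi] : exists i : 'I_4, ~~ (row i 1%:M <= matL n s)%MS.
  apply/existsP; rewrite -negb_forall; apply/negP => /forallP H.
  have : (1%:M <= matL n s)%MS by apply/row_subP => i; exact: H.
  move/mxrankS; rewrite mxrank1 => H4.
  by have := leq_trans H4 (rank_leq_row _); rewrite leqNgt Hn.
exists (row i 1%:M).
rewrite /row_free; apply/eqP/anti_leq/andP; split; first exact: rank_leq_row.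
have Hr : \rank (matL n s) = n by apply/eqP.
have H1 : (matL n s + row i 1%:M <= matL n.+1 (rcons s (row i 1%:M)))%MS.
  rewrite addsmx_sub; apply/andP; split.
    apply/row_subP => j; rewrite row_matL.
    apply: (submx_trans _ (row_sub (widen_ord (leqnSn n) j) _)).
    by rewrite row_matL /= nth_rcons Hs ltn_ord submx_refl.
  apply: (submx_trans _ (row_sub ord_max _)).
  by rewrite row_matL /= nth_rcons Hs ltnn eqxx submx_refl.
have H2 : (matL n s < matL n s + row i 1%:M)%MS.
  rewrite ltmxE addsmxSl /=; apply/negP => H3; move/negP: Hi; apply.
  exact: submx_trans (addsmxSr _ _) H3.
by have := rank_ltmx H2; rewrite Hr => H3; exact: leq_trans H3 (mxrankS H1).
Qed.

Lemma extend_free2 u v : free2 u v -> exists w z, free4 u v w z.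
Proof.
move/free2_row_free => H2.
have [w H3] := extend_free (s := [:: u; v]) erefl erefl H2.
have [z H4] := extend_free (s := [:: u; v; w]) erefl erefl H3.
by exists w, z; apply/free4P.
Qed.

Lemma extend_free3 u v w : free3 u v w -> exists z, free4 u v w z.
Proof.
move/free3_row_free => H3.
by have [z H4] := extend_free (s := [:: u; v; w]) erefl erefl H3; exists z; apply/free4P.
Qed.

Lemma polar_basis0 (c : cubic F) x u1 u2 u3 u4 : free4 u1 u2 u3 u4 ->
  polar c x u1 = 0 -> polar c x u2 = 0 -> polar c x u3 = 0 ->
  polar c x u4 = 0 -> forall m, dF c m x = 0.
Proof.
move=> /free4P Hf H1 H2 H3 H4 m.
pose gv : 'rV[F]_4 := \row_m dF c m x.
have Hg : gv *m (matL 4 [:: u1; u2; u3; u4])^T = 0.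
  apply/rowP => i; rewrite !mxE.
  transitivity (polar c x (nth 0 [:: u1; u2; u3; u4] i)).
    by apply: eq_bigr => j _; rewrite !mxE.
  by case: i => -[|[|[|[|//]]]].
have Hf' : row_free (matL 4 [:: u1; u2; u3; u4])^T by rewrite /row_free mxrank_tr.
move: Hg => /eqP; rewrite (mulmx_free_eq0 _ Hf') => /eqP Hg.
by have := congr1 (fun M : 'rV[F]_4 => M 0 m) Hg; rewrite !mxE.
Qed.

Lemma submx_comb m (M : 'M[F]_(m, 4)) u v a b : a *: u + b *: v = 0 -> b != 0 ->
  (u <= M)%MS -> (v <= M)%MS.
Proof.
move=> H Hb Hu.
have -> : v = (- (b^-1 * a)) *: u.
  apply: (scalerI Hb); rewrite scalerA mulrN mulrA divff // mul1r scaleNr.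
  by apply/eqP; rewrite -addr_eq0 addrC H.
exact: scalemx_sub.
Qed.

Lemma free2_out m (M : 'M[F]_(m, 4)) u v :
  u != 0 -> (u <= M)%MS -> ~~ (v <= M)%MS -> free2 u v.
Proof.
move=> Hu HuM HvM a b H.
have [b0|b0] := eqVneq b 0; last by move/negP: HvM; case; exact: submx_comb H b0 HuM.
split => //; move/eqP: H; rewrite b0 scale0r addr0 scaler_eq0 (negbTE Hu) orbF.
by move/eqP.
Qed.

Lemma free2_neq0l u v : free2 u v -> u != 0.
Proof.
move=> H; apply/eqP => Hu; have := H 1 0; rewrite Hu scaler0 scale0r addr0.
by move=> /(_ erefl) [/eqP]; rewrite oner_eq0.
Qed.

Lemma free2_neq0r u v : free2 u v -> v != 0.
Proof.
move=> H; apply/eqP => Hv; have := H 0 1; rewrite Hv scaler0 scale0r addr0.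
by move=> /(_ erefl) [_ /eqP]; rewrite oner_eq0.
Qed.

Lemma line_coords (M : 'M[F]_(2, 4)) u v : is_line M -> free2 u v ->
  (u <= M)%MS -> (v <= M)%MS ->
  forall x, (x <= M)%MS -> exists a b, x = a *: u + b *: v.
Proof.
move=> HM Hf Hu Hv x Hx; apply: sub_lin2; apply: submx_trans Hx _.
have Hs : (lin2 u v <= M)%MS.
  by apply/row_subP => -[[|[|//]] Hi]; rewrite row_matL.
have := (mxrank_leqif_sup Hs).2; rewrite HM.
by move: (free2_row_free Hf); rewrite /row_free => /eqP -> <-.
Qed.

End LinearAlgebra.

Lemma free4_map (K L : fieldType) (f : {rmorphism K -> L}) (u v w z : 'rV[K]_4) :
  free4 u v w z -> free4 (map_mx f u) (map_mx f v) (map_mx f w) (map_mx f z).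
Proof.
move/free4P => Hf; apply/free4P.
have -> : matL 4 [:: map_mx f u; map_mx f v; map_mx f w; map_mx f z] =
    map_mx f (matL 4 [:: u; v; w; z]).
  by apply/matrixP => -[[|[|[|[|//]]]] Hi] j; rewrite !mxE.
by rewrite /row_free mxrank_map.
Qed.

Section LineCuts.
Variable K : fieldType.
Variable c : cubic K.
Implicit Types (x y p q r : 'rV[K]_4) (Base : 'rV[K]_4 -> Prop).
Local Notation FK := (evalF c).
Local Notation BK := (polar c).

Lemma line_form_lin2 p q : line_form c (lin2 p q) =
  'X^3 * (FK p)%:P + 'X^2 * (BK p q)%:P + 'X * (BK q p)%:P + (FK q)%:P.
Proof.
rewrite /line_form.
have -> : \row_i ('X * (lin2 p q ord0 i)%:P + (lin2 p q ord_max i)%:P) =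
   'X *: map_mx polyC p + 1 *: map_mx polyC q.
  by apply/rowP => j; rewrite !mxE /= mul1r.
rewrite (evalF_comb2 (map_cubic polyC c)) !evalF_map !polar_map; ring.
Qed.

Lemma tangent_cut p q : free2 p q -> FK p = 0 -> FK q = 0 ->
  BK p q = 0 -> BK q p != 0 -> line_cuts c (lin2 p q) p p q.
Proof.
move=> Hf Hp Hq Hpq Hqp; split; first exact: free2_line.
split; first exact: free2_neq0l Hf.
split; first exact: free2_neq0l Hf.
split; first exact: free2_neq0r Hf.
exists 1, 0, 1, 0, 0, 1, (BK q p); split => //; rewrite ?lin2_0 ?lin2_1.
- by rewrite scale1r scale0r addr0.
- by rewrite scale1r scale0r addr0.
- by rewrite scale1r scale0r add0r.
rewrite line_form_lin2 Hp Hq Hpq -mul_polyC !scale0r !scale1r !polyC0; ring.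
Qed.

Lemma chord_cut p q : free2 p q -> FK p = 0 -> FK q = 0 -> BK p q != 0 ->
  line_cuts c (lin2 p q) q (- BK q p *: p + BK p q *: q) p.
Proof.
move=> Hf Hp Hq Hpq; split; first exact: free2_line.
split; first exact: free2_neq0r Hf.
split.
  by apply/eqP => H; have [_ /eqP] := Hf _ _ H; rewrite (negbTE Hpq).
split; first exact: free2_neq0l Hf.
exists 0, 1, (- BK q p), (BK p q), 1, 0, (-1); split => //; rewrite ?lin2_0 ?lin2_1.
- by rewrite scale1r scale0r add0r.
- by [].
- by rewrite scale1r scale0r addr0.
- by rewrite oppr_eq0 oner_eq0.
rewrite line_form_lin2 Hp Hq -mul_polyC !scale0r !scale1r !polyC0 !polyCN polyC1.
rewrite -!mul_polyC; ring.
Qed.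

Lemma span_tangent Base p q : in_Span c Base p -> free2 p q -> FK p = 0 ->
  FK q = 0 -> BK p q = 0 -> BK q p != 0 -> in_Span c Base q.
Proof.
move=> Hp Hf Fp Fq Bpq Bqp.
exact: (Span_step Hp Hp (tangent_cut Hf Fp Fq Bpq Bqp)).
Qed.

Lemma span_chord Base p q : in_Span c Base q -> in_Span c Base (- BK q p *: p + BK p q *: q) ->
  free2 p q -> FK p = 0 -> FK q = 0 -> BK p q != 0 -> in_Span c Base p.
Proof.
move=> Hq Hr Hf Fp Fq Bpq.
exact: (Span_step Hq Hr (chord_cut Hf Fp Fq Bpq)).
Qed.

End LineCuts.

Lemma quadratic_root (L : closedFieldType) (a b d : L) :
  a != 0 -> exists x, a * x ^+ 2 + b * x + d = 0.
Proof.
move=> Ha; pose p := a *: 'X^2 + b *: 'X + d%:P.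
have : size p != 1%N.
  apply/negP => /eqP Hs.
  have : p`_2 = 0 by rewrite nth_default // Hs.
  rewrite /p !coefD !coefZ coefXn coefX coefC /= mulr1 mulr0 !addr0 => /eqP.
  by rewrite (negbTE Ha).
case/closed_rootP => x; rewrite /root /p !hornerE => /eqP Hx; exists x.
by rewrite -Hx expr2 mulrA.
Qed.

Lemma binary_quadratic_zero (L : closedFieldType) (q2 q1 q0 : L) :
  exists a b, (a != 0) || (b != 0) /\ a ^+ 2 * q2 + a * b * q1 + b ^+ 2 * q0 = 0.
Proof.
have [->|H] := eqVneq q2 0.
  by exists 1, 0; rewrite oner_eq0 /=; split => //; ring.
have [x Hx] := quadratic_root q1 q0 H.
by exists x, 1; rewrite oner_eq0 orbT; split => //; rewrite -Hx; ring.
Qed.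

Section FieldSize.
Variable K : fieldType.
Hypothesis K4 : exists a b d e : K, uniq [:: a; b; d; e].

Lemma three_nonzero : exists t1 t2 t3 : K,
  [/\ t1 != 0, t2 != 0, t3 != 0 & [/\ t1 != t2, t1 != t3 & t2 != t3]].
Proof.
case: K4 => a [b [d [e]]] /=; rewrite !inE !negb_or.
case/andP => /and3P [ab ad ae] /andP [/andP [bd be] /andP [de _]].
have [a0|a0] := eqVneq a 0.
  by subst a; exists b, d, e; split; rewrite // eq_sym.
have [b0|b0] := eqVneq b 0.
  by subst b; exists a, d, e; split; rewrite // eq_sym.
have [d0|d0] := eqVneq d 0.
  by subst d; exists a, b, e; split; rewrite // eq_sym.
by exists a, b, d.
Qed.

Lemma nonzero_nonone : exists e : K, e != 0 /\ e != 1.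
Proof.
have [t1 [t2 [t3 [h1 h2 _ [h12 _ _]]]]] := three_nonzero.
have [E|E] := eqVneq t1 1; last by exists t1.
by exists t2; split => //; rewrite -E eq_sym.
Qed.

(* The equation t^2 g = p (p != 0) has at most two roots, so some nonzero
   t avoids it. *)
Lemma avoid_square_root (p g : K) : p != 0 -> exists t, t != 0 /\ t ^+ 2 * g != p.
Proof.
move=> Hp.
have [t1 [t2 [t3 [h1 h2 h3 [h12 h13 h23]]]]] := three_nonzero.
have [E1|E1] := eqVneq (t1 ^+ 2 * g) p; last by exists t1.
have [E2|E2] := eqVneq (t2 ^+ 2 * g) p; last by exists t2.
have [E3|E3] := eqVneq (t3 ^+ 2 * g) p; last by exists t3.
have Hg : g != 0 by apply: contraNneq Hp => Hg; rewrite -E1 Hg mulr0.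
have opp_root u v : u ^+ 2 * g = p -> v ^+ 2 * g = p -> u != v -> v = - u.
  move=> Eu Ev Huv.
  have E0 : (u - v) * (u + v) * g = 0.
    have -> : (u - v) * (u + v) * g = u ^+ 2 * g - v ^+ 2 * g by ring.
    by rewrite Eu Ev subrr.
  move/eqP: E0; rewrite !mulf_eq0 (negbTE Hg) orbF subr_eq0 (negbTE Huv) /=.
  by rewrite addr_eq0 => /eqP ->; rewrite opprK.
have := opp_root _ _ E1 E2 h12; have := opp_root _ _ E1 E3 h13 => <- E.
by move/eqP: h23; rewrite E.
Qed.

End FieldSize.

(* Let the line through x1 and r lie in S and let
   f be a third direction with B(x1,f) = 0, T(x1,r,f) != 0, B(r,f) != 0.
   On the plane pt a b = a x1 + b r + f, F restricts to a conic that is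
   linear in a.  Choosing a = tau and two roots b1, b2 of the remaining
   quadratic in b gives points z1, z2 of S(K) such that the line x1 z1 is
   tangent at x1, the line x2 z2 is tangent at x2 = B(r,f) x1 - T r, and
   the line z1 z2 passes through r.  Hence r lies in the span of x1, x2. *)
Section PlaneConstruction.
Variables (K : fieldType) (c : cubic K) (Base : 'rV[K]_4 -> Prop).
Variables x1 r f : 'rV[K]_4.
Hypothesis free_x1rf : free3 x1 r f.
Hypotheses (Fx1 : evalF c x1 = 0) (Fr : evalF c r = 0).
Hypotheses (Bx1r : polar c x1 r = 0) (Brx1 : polar c r x1 = 0).
Hypothesis Bx1f : polar c x1 f = 0.
Hypothesis T_neq0 : polar3 c x1 r f != 0.
Hypothesis b0_neq0 : polar c r f != 0.

Local Notation FK := (evalF c).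
Local Notation BK := (polar c).
Local Notation T := (polar3 c x1 r f).
Local Notation b0 := (polar c r f).
Local Notation phi := (polar c f x1).
Local Notation psi := (polar c f r).
Local Notation pt a b := (a *: x1 + b *: r + 1 *: f).

Let Bx1x1 : BK x1 x1 = 0. Proof. by rewrite polar_diag Fx1 mulr0. Qed.
Let Brr : BK r r = 0. Proof. by rewrite polar_diag Fr mulr0. Qed.

Lemma line_x1r_F a b : FK (a *: x1 + b *: r) = 0.
Proof. by rewrite evalF_comb2 Fx1 Fr Bx1r Brx1; ring. Qed.

Lemma line_x1r_polar_x1 a b : BK (a *: x1 + b *: r) x1 = 0.
Proof.
by rewrite polar_comb2 polar3C23 polar3_diag Bx1x1 Bx1r Brx1; ring.
Qed.

Lemma line_x1r_polar_r a b : BK (a *: x1 + b *: r) r = 0.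
Proof.
by rewrite polar_comb2 polar3C12 polar3C23 polar3_diag Bx1r Brx1 Brr; ring.
Qed.

Lemma plane_F a b : FK (pt a b) = a * (phi + b * T) + b0 * b ^+ 2 + psi * b + FK f.
Proof. by rewrite evalF_comb3 Fx1 Fr Bx1r Brx1 Bx1f; ring. Qed.

Lemma plane_polar_x1 a b : BK x1 (pt a b) = 0.
Proof. by rewrite polar_linear3 Bx1x1 Bx1r Bx1f; ring. Qed.

Lemma plane_polar_r a b : BK r (pt a b) = b0.
Proof. by rewrite polar_linear3 Brx1 Brr; ring. Qed.

Lemma plane_polar_to_x1 a b : BK (pt a b) x1 = phi + b * T.
Proof.
rewrite polar_comb3 [polar3 c x1 r x1]polar3C23 [polar3 c x1 f x1]polar3C23.
rewrite !polar3_diag [polar3 c r f x1]polar3C23 [polar3 c r x1 f]polar3C12.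
by rewrite Bx1x1 Bx1r Brx1 Bx1f; ring.
Qed.

Lemma plane_polar_to_r a b : BK (pt a b) r = psi + a * T + 2 * b * b0.
Proof.
rewrite polar_comb3 [polar3 c x1 r r]polar3C12 [polar3 c r x1 r]polar3C23.
rewrite [polar3 c x1 f r]polar3C23 [polar3 c r f r]polar3C23 !polar3_diag.
by rewrite Bx1r Brx1 Brr; ring.
Qed.

Lemma plane_free al be a b : (al != 0) || (be != 0) ->
  free2 (al *: x1 + be *: r) (pt a b).
Proof.
move=> Hab la mu E.
have [E1 E2 mu0] : [/\ la * al + mu * a = 0, la * be + mu * b = 0 & mu = 0].
  by apply: free_x1rf; rewrite -E; apply/rowP => j; rewrite !mxE; ring.
split => //; move: E1 E2; rewrite mu0 !mul0r !addr0 => /eqP E1 /eqP E2.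
move: E1 E2; rewrite !mulf_eq0.
case/orP: Hab => /negbTE ->; rewrite ?orbF; first by move/eqP.
by move=> _ /eqP.
Qed.

Lemma plane_conic_points : exists tau b1 b2, [/\ FK (pt tau b1) = 0,
  FK (pt tau b2) = 0, phi + b1 * T != 0 & tau * T + b0 * (b1 + b2) + psi = 0].
Proof.
pose b1 : K := if phi == 0 then 1 else 0.
have Hn1 : phi + b1 * T != 0.
  by rewrite /b1; have [->|H] := eqVneq phi 0; rewrite ?mul1r ?add0r ?mul0r ?addr0.
pose tau := - (b0 * b1 ^+ 2 + psi * b1 + FK f) / (phi + b1 * T).
pose b2 := - (tau * T + psi) / b0 - b1.
have Fz1 : FK (pt tau b1) = 0 by rewrite plane_F /tau; field.
have Hb12 : tau * T + b0 * (b1 + b2) + psi = 0 by rewrite /b2; field.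
exists tau, b1, b2; split => //.
rewrite plane_F.
have -> : tau * (phi + b2 * T) + b0 * b2 ^+ 2 + psi * b2 + FK f =
   (tau * (phi + b1 * T) + b0 * b1 ^+ 2 + psi * b1 + FK f) +
   (b2 - b1) * (tau * T + b0 * (b1 + b2) + psi) by ring.
by rewrite -plane_F Fz1 Hb12 mulr0 addr0.
Qed.

Lemma plane_secant tau b1 b2 : FK (pt tau b1) = 0 ->
  tau * T + b0 * (b1 + b2) + psi = 0 ->
  line_cuts c (lin2 r (pt tau b1)) (pt tau b1) (pt tau b2) r.
Proof.
move=> Fz1 Hb12.
have free_rz a b : free2 r (pt a b).
  have := @plane_free 0 1 a b; rewrite scale0r add0r [1 *: r]scale1r oner_eq0 orbT.
  by apply.
split; first exact: free2_line.
split; first exact: free2_neq0r (free_rz tau b1).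
split; first exact: free2_neq0r (free_rz tau b2).
split; first exact: free2_neq0l (free_rz tau b1).
exists 0, 1, (- (b1 - b2)), 1, 1, 0, (- b0); split; rewrite ?lin2_0 ?lin2_1.
- by rewrite scale0r add0r !scale1r.
- by apply/rowP => j; rewrite !mxE; ring.
- by rewrite scale1r scale0r addr0.
- by rewrite oppr_eq0.
rewrite line_form_lin2 Fr Fz1 plane_polar_r plane_polar_to_r.
have -> : psi + tau * T + 2 * b1 * b0 = b0 * (b1 - b2).
  have -> : psi + tau * T + 2 * b1 * b0 =
    b0 * (b1 - b2) + (tau * T + b0 * (b1 + b2) + psi) by ring.
  by rewrite Hb12 addr0.
rewrite -mul_polyC !scale0r !scale1r !polyC0 polyCN polyC1 polyCM polyCN polyCB.
ring.
Qed.

Lemma plane_span : in_Span c Base x1 ->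
  in_Span c Base (b0 *: x1 + (- T) *: r) -> in_Span c Base r.
Proof.
move=> span_x1 span_x2.
have [tau [b1 [b2 [Fz1 Fz2 Hn1 Hb12]]]] := plane_conic_points.
have span_z1 : in_Span c Base (pt tau b1).
  have free_x1z1 : free2 x1 (pt tau b1).
    have := @plane_free 1 0 tau b1; rewrite oner_eq0 [1 *: x1]scale1r scale0r addr0.
    by apply.
  have Bz1x1 : BK (pt tau b1) x1 != 0 by rewrite plane_polar_to_x1.
  exact: (span_tangent span_x1 free_x1z1 Fx1 Fz1 (plane_polar_x1 _ _) Bz1x1).
have span_z2 : in_Span c Base (pt tau b2).
  have free_x2z2 : free2 (b0 *: x1 + (- T) *: r) (pt tau b2).
    by apply: plane_free; rewrite b0_neq0.
  have Bx2z2 : BK (b0 *: x1 + (- T) *: r) (pt tau b2) = 0.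
    rewrite polar_linear3 line_x1r_polar_x1 line_x1r_polar_r polar_comb2.
    by rewrite Bx1f; ring.
  have Bz2x2 : BK (pt tau b2) (b0 *: x1 + (- T) *: r) != 0.
    rewrite polar_linear plane_polar_to_x1 plane_polar_to_r.
    have -> : b0 * (phi + b2 * T) + - T * (psi + tau * T + 2 * b2 * b0) =
      b0 * (phi + b1 * T) - T * (tau * T + b0 * (b1 + b2) + psi) by ring.
    by rewrite Hb12 mulr0 subr0 mulf_neq0.
  exact: (span_tangent span_x2 free_x2z2 (line_x1r_F _ _) Fz2 Bx2z2 Bz2x2).
exact: (Span_step span_z1 span_z2 (plane_secant Fz1 Hb12)).
Qed.

End PlaneConstruction.

Section SmoothCubicLine.
Variables (K : fieldType) (L : closedFieldType) (iota : {rmorphism K -> L}).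
Hypothesis K4 : exists a b d e : K, uniq [:: a; b; d; e].
Variable c : cubic K.
Hypothesis smooth : smooth_cubic (map_cubic iota c).
Variable A : 'M[K]_(2,4).
Hypothesis lineA : is_line A.
Hypothesis A_in_S : line_in_surface (map_cubic iota c) (map_mx iota A).
Variable P : 'rV[K]_4.
Hypothesis P_neq0 : P != 0.
Hypothesis P_on : (P <= A)%MS.
Hypothesis P_unique : forall B : 'M[L]_(2,4), is_line B ->
  line_in_surface (map_cubic iota c) B ->
  (map_mx iota P <= B)%MS -> (B == map_mx iota A)%MS.

Local Notation FK := (evalF c).
Local Notation BK := (polar c).
Local Notation TK := (polar3 c).
Local Notation cL := (map_cubic iota c).
Local Notation im x := (map_mx iota x).
Implicit Types (u v w x y z : 'rV[K]_4).

Lemma line_F x : (x <= A)%MS -> FK x = 0.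
Proof.
move=> H; apply: (fmorph_inj iota); rewrite rmorph0 -evalF_map; apply: A_in_S.
by rewrite map_submx.
Qed.

(* F vanishes on the line, so all the coefficients of F(x + t y) vanish;
   a field with an element other than 0 and 1 separates the two middle
   coefficients. *)
Lemma line_polar x y : (x <= A)%MS -> (y <= A)%MS -> BK x y = 0.
Proof.
move=> Hx Hy; have [e [e0 e1]] := nonzero_nonone K4.
have H t : t * BK x y + t ^+ 2 * BK y x = 0.
  have := line_F (addmx_sub (scalemx_sub 1 Hx) (scalemx_sub t Hy)).
  by rewrite evalF_comb2 (line_F Hx) (line_F Hy) => <-; ring.
have : BK x y * (e * (e - 1)) = 0.
  have -> : BK x y * (e * (e - 1)) =
    e ^+ 2 * (1 * BK x y + 1 ^+ 2 * BK y x) - (e * BK x y + e ^+ 2 * BK y x) by ring.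
  by rewrite H H mulr0 subrr.
by move/eqP; rewrite !mulf_eq0 (negbTE e0) subr_eq0 (negbTE e1) /= orbF => /eqP.
Qed.

Lemma smooth_pointK x : x != 0 -> FK x = 0 -> exists m, dF c m x != 0.
Proof.
move=> Hx HF.
have Hx' : im x != 0 by rewrite map_mx_eq0.
have HF' : evalF cL (im x) = 0 by rewrite evalF_map HF rmorph0.
have [m Hm] := smooth Hx' HF'.
by exists m; move: Hm; rewrite dF_map fmorph_eq0.
Qed.

(* Along the line through u1, u2, the polar z |-> B(z, w1) in a direction
   w1 off the line cannot vanish identically: otherwise a zero over L of
   the binary quadratic z |-> B(z, w2) would be a singular point of S. *)
Lemma line_polar_nondeg u1 u2 w1 w2 : (u1 <= A)%MS -> (u2 <= A)%MS ->
  free4 u1 u2 w1 w2 ->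
  BK u1 w1 = 0 -> TK u1 u2 w1 = 0 -> BK u2 w1 = 0 -> False.
Proof.
move=> H1 H2 Hf B1 T1 B2.
have [a [b [Hab Hq]]] :=
  binary_quadratic_zero (iota (BK u1 w2)) (iota (TK u1 u2 w2)) (iota (BK u2 w2)).
have HfL := free4_map (f := iota) Hf.
pose z := a *: im u1 + b *: im u2.
have Hz : z != 0.
  apply/eqP => Hz0.
  have [Ha Hb _ _] : [/\ a = 0, b = 0, 0 = 0 :> L & 0 = 0 :> L].
    by apply: HfL; rewrite !scale0r !addr0.
  by move: Hab; rewrite Ha Hb eqxx.
have HzS : evalF cL z = 0.
  by apply: A_in_S; apply: addmx_sub; apply: scalemx_sub; rewrite map_submx.
have [m /eqP []] := smooth Hz HzS.
apply: (polar_basis0 HfL); rewrite /z polar_comb2 !polar_map !polar3_map.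
- rewrite polar3C23 polar3_diag polar_diag (line_F H1) (line_polar H1 H2).
  by rewrite (line_polar H2 H1) !(mulr0, rmorph0) !addr0.
- rewrite polar3C12 polar3C23 polar3_diag polar_diag (line_F H2) (line_polar H1 H2).
  by rewrite (line_polar H2 H1) !(mulr0, rmorph0) !addr0.
- by rewrite B1 T1 B2 !(mulr0, rmorph0) !addr0.
- by rewrite -Hq; ring.
Qed.

(* If v lies on S with B(P,v) = B(v,P) = 0, the line Pv lies on S, so by
   the hypothesis on P it is the line A. *)
Lemma no_second_line (v : 'rV[L]_4) : ~~ (v <= im A)%MS -> evalF cL v = 0 ->
  polar cL (im P) v = 0 -> polar cL v (im P) = 0 -> False.
Proof.
move=> Hv HF H1 H2.
have HPL : im P != 0 by rewrite map_mx_eq0.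
have HPA : (im P <= im A)%MS by rewrite map_submx.
have Hfree := free2_out HPL HPA Hv.
have HS : line_in_surface cL (lin2 (im P) v).
  move=> x /sub_lin2 [a [b ->]].
  by rewrite evalF_comb2 HF H1 H2 evalF_map (line_F P_on) rmorph0 !mulr0 !addr0.
have HP : (im P <= lin2 (im P) v)%MS.
  by apply: (submx_trans _ (row_sub ord0 _)); rewrite lin2_0 submx_refl.
move: (P_unique (free2_line Hfree) HS HP) => /andP [Hsub _].
move/negP: Hv; apply; apply: submx_trans Hsub.
by apply: (submx_trans _ (row_sub ord_max _)); rewrite lin2_1 submx_refl.
Qed.

Lemma span_base_P : in_Span c (proj_point P) P.
Proof. by apply: Span_base; split => //; exists 1; rewrite scale1r. Qed.

(* A point x of Gamma_P off the line: the line Px is tangent at P and not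
   contained in S, so it meets S in P + P + x. *)
Lemma Gamma_off_line x : Gamma_pt c P x -> ~~ (x <= A)%MS ->
  in_Span c (proj_point P) x.
Proof.
case=> Hx HF HB HxA.
have HBPx : BK P x = 0 by rewrite -HB.
have Hxp : BK x P != 0.
  apply/eqP => H0; apply: (no_second_line (v := im x)).
  - by rewrite map_submx.
  - by rewrite evalF_map HF rmorph0.
  - by rewrite polar_map HBPx rmorph0.
  - by rewrite polar_map H0 rmorph0.
exact: (span_tangent span_base_P (free2_out P_neq0 P_on HxA) (line_F P_on) HF HBPx Hxp).
Qed.

Lemma second_point : exists Q2, (Q2 <= A)%MS /\ free2 P Q2.
Proof.
have [i Hi] : exists i, ~~ (row i A <= P)%MS.
  apply/existsP; rewrite -negb_forall; apply/negP => /forallP H.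
  have : (A <= P)%MS by apply/row_subP.
  by move/mxrankS; rewrite lineA => H2; have := leq_trans H2 (rank_leq_row P).
exists (row i A); split; first exact: row_sub.
exact: free2_out P_neq0 (submx_refl P) Hi.
Qed.

Lemma direction_off_line Q2 w g : (Q2 <= A)%MS -> free2 P Q2 ->
  free4 P Q2 w g -> ~~ (w <= A)%MS.
Proof.
move=> HQ Hf Hb; apply/negP => /(line_coords lineA Hf P_on HQ) [a [b Hab]].
have [_ _ /eqP] : [/\ a = 0, b = 0, -1 = 0 :> K & 0 = 0 :> K].
  by apply: Hb; rewrite Hab; apply/rowP => j; rewrite !mxE; ring.
by rewrite oppr_eq0 oner_eq0.
Qed.

Lemma tangent_basis : exists Q2 w g,
  [/\ (Q2 <= A)%MS, free2 P Q2, free4 P Q2 w g & BK P w = 0].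
Proof.
have [Q2 [HQ Hf]] := second_point.
have [e1 [e2 Hf4]] := extend_free2 Hf.
have [g [e [Hg Hb]]] : exists g e, BK P g != 0 /\ free4 P Q2 g e.
  have [H1|H1] := eqVneq (BK P e1) 0; last by exists e1, e2.
  have [H2|H2] := eqVneq (BK P e2) 0; last by exists e2, e1; split; last exact: free4_swap.
  have [m /eqP []] := smooth_pointK P_neq0 (line_F P_on).
  apply: (polar_basis0 Hf4) => //; last exact: line_polar.
  by rewrite polar_diag (line_F P_on) mulr0.
pose k := BK P e / BK P g.
exists Q2, (1 *: e + (- k) *: g), g; split => //; last by rewrite polar_linear /k; field.
move=> a b s d E.
have [-> -> Hd s0] : [/\ a = 0, b = 0, d - s * k = 0 & s = 0].
  by apply: Hb; rewrite -E; apply/rowP => j; rewrite !mxE; ring.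
by move: Hd; rewrite s0 mul0r subr0 => ->.
Qed.

(* In the plane spanned by the line and a tangent direction w with
   B(w,P) = T(Q2,w,P) = 0, S would contain a second line through P. *)
Lemma no_tangent_plane_line Q2 w g : (Q2 <= A)%MS -> free2 P Q2 ->
  free4 P Q2 w g -> BK P w = 0 -> BK w P = 0 -> TK Q2 w P = 0 -> False.
Proof.
move=> HQ Hf Hb HPw HwP T1.
have Hw := direction_off_line HQ Hf Hb.
have [HQw|HQw] := eqVneq (BK Q2 w) 0.
  by apply: (line_polar_nondeg P_on HQ Hb HPw _ HQw); rewrite polar3C12 polar3C23.
have Hnz : iota (BK Q2 w) != 0 by rewrite fmorph_eq0.
have [al Hal] := quadratic_root (iota (BK w Q2)) (iota (FK w)) Hnz.
apply: (no_second_line (v := al *: im Q2 + 1 *: im w)).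
- apply/negP => Hv; move/negP: Hw; apply; rewrite -(map_submx iota).
  have -> : im w = (al *: im Q2 + 1 *: im w) + (- al) *: im Q2.
    by apply/rowP => j; rewrite !mxE; ring.
  by apply: addmx_sub => //; apply: scalemx_sub; rewrite map_submx.
- rewrite evalF_comb2 !evalF_map !polar_map (line_F HQ) rmorph0.
  by apply: etrans Hal; ring.
- by rewrite polar_linear !polar_map (line_polar P_on HQ) HPw rmorph0 !mulr0 addr0.
- rewrite polar_comb2 !polar_map polar3_map (line_polar HQ P_on) T1 HwP rmorph0.
  by rewrite !mulr0 !addr0.
Qed.

Lemma tangent_direction : exists d, [/\ BK d P != 0, BK P d = 0 & ~~ (d <= A)%MS].
Proof.
have [Q2 [w [g [HQ Hf Hb HPw]]]] := tangent_basis.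
have Hw := direction_off_line HQ Hf Hb.
have [H0|H0] := eqVneq (BK w P) 0; last by exists w.
have [T1|T1] := eqVneq (TK Q2 w P) 0.
  by case: (no_tangent_plane_line HQ Hf Hb HPw H0 T1).
exists (1 *: Q2 + 1 *: w); split.
- suff -> : BK (1 *: Q2 + 1 *: w) P = TK Q2 w P by [].
  by rewrite polar_comb2 (line_polar HQ P_on) H0; ring.
- by rewrite polar_linear (line_polar P_on HQ) HPw !mulr0 addr0.
apply/negP => Hd; move/negP: Hw; apply.
have -> : w = (1 *: Q2 + 1 *: w) + (-1) *: Q2 by apply/rowP => j; rewrite !mxE; ring.
by apply: addmx_sub => //; apply: scalemx_sub.
Qed.

(* The third point of the tangent line Pd is a point of Gamma_P(K) off
   the line. *)
Lemma Gamma_point_off_line : exists y,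
  [/\ y != 0, ~~ (y <= A)%MS, FK y = 0 & BK P y = 0].
Proof.
have [d [Hd1 Hd2 Hd3]] := tangent_direction.
have HP0 := line_F P_on.
exists (FK d *: P + (- BK d P) *: d).
have Hy : ~~ ((FK d *: P + (- BK d P) *: d)%R <= A)%MS.
  apply/negP => Hy; move/negP: Hd3; apply.
  apply: (submx_comb (u := (FK d *: P + (- BK d P) *: d) + (- FK d) *: P)
    (a := 1) (b := BK d P)) => //.
    by apply/rowP => j; rewrite !mxE; ring.
  by apply: addmx_sub => //; apply: scalemx_sub.
split => //.
- by apply: contraNneq Hy => ->; rewrite sub0mx.
- by rewrite evalF_comb2 HP0 Hd2; ring.
- by rewrite polar_linear polar_diag HP0 Hd2 !mulr0 addr0.
Qed.

(* A point x of the line with B(x,y) != 0 is the third point of the chord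
   through y and a further point of Gamma_P off the line. *)
Lemma span_line_chord y x : y != 0 -> ~~ (y <= A)%MS -> FK y = 0 ->
  BK P y = 0 -> (x <= A)%MS -> x != 0 -> BK x y != 0 ->
  in_Span c (proj_point P) x.
Proof.
move=> Hy0 HyA HFy HPy HxA Hx0 Hxy.
have HrA : ~~ ((- BK y x *: x + BK x y *: y)%R <= A)%MS.
  apply/negP => Hr; move/negP: HyA; apply.
  apply: (submx_comb (u := (- BK y x *: x + BK x y *: y) + BK y x *: x)
    (a := -1) (b := BK x y)) => //.
    by apply/rowP => j; rewrite !mxE; ring.
  by apply: addmx_sub => //; apply: scalemx_sub.
apply: (span_chord _ _ (free2_out Hx0 HxA HyA) (line_F HxA) HFy Hxy).
  by apply: Gamma_off_line.
apply: Gamma_off_line => //; split.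
- by apply: contraNneq HrA => ->; rewrite sub0mx.
- by rewrite evalF_comb2 (line_F HxA) HFy; ring.
- rewrite -[\sum_(m < 4) _]/(BK P _) polar_linear (line_polar P_on HxA) HPy.
  by rewrite !mulr0 addr0.
Qed.

(* The remaining points r0 of the line, those with B(r0,y) = 0, are
   obtained by the plane construction in a plane through r0. *)
Section LinePoint.
Variables y r0 : 'rV[K]_4.
Hypotheses (y_neq0 : y != 0) (y_off : ~~ (y <= A)%MS).
Hypotheses (Fy : FK y = 0) (BPy : BK P y = 0).
Hypotheses (r0_on : (r0 <= A)%MS) (r0_indep : ~~ (r0 <= P)%MS).
Hypothesis Br0y : BK r0 y = 0.

Lemma free_Pr0y : free3 P r0 y.
Proof.
have HPr := free2_out P_neq0 (submx_refl P) r0_indep.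
move=> a b s E; have [s0|s0] := eqVneq s 0.
  by move: E; rewrite s0 scale0r addr0 => /HPr [-> ->].
case/negP: y_off; apply: (submx_comb (u := a *: P + b *: r0) (a := 1) (b := s)) => //.
  by rewrite scale1r.
by apply: addmx_sub; apply: scalemx_sub.
Qed.

(* Completing P, r0, y to a basis by g: since P and r0 are smooth points
   whose gradients kill P, r0 and y, they do not kill g. *)
Lemma line_point_basis : exists g,
  [/\ free4 P r0 y g, TK P r0 y != 0, BK P g != 0 & BK r0 g != 0].
Proof.
have [g Hb] := extend_free3 free_Pr0y.
have r0_neq0 : r0 != 0 by apply: contraNneq r0_indep => ->; rewrite sub0mx.
exists g; split => //.
- by apply/eqP => T0; exact: line_polar_nondeg P_on r0_on Hb BPy T0 Br0y.
- apply/eqP => H0; have [m /eqP []] := smooth_pointK P_neq0 (line_F P_on).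
  by apply: (polar_basis0 Hb) => //; apply: line_polar.
- apply/eqP => H0; have [m /eqP []] := smooth_pointK r0_neq0 (line_F r0_on).
  by apply: (polar_basis0 Hb) => //; apply: line_polar.
Qed.

(* Points a P + b r0 with a, b != 0 have B(., y) = a b T(P,r0,y) != 0. *)
Lemma span_line_comb a b : a != 0 -> in_Span c (proj_point P) (a *: P + b *: r0).
Proof.
move=> Ha; have [g [_ HTy _ _]] := line_point_basis.
have HPr := free2_out P_neq0 (submx_refl P) r0_indep.
have Hnz : a *: P + b *: r0 != 0 by apply/eqP => /HPr [Ha0 _]; move/eqP: Ha.
have [b0|b_neq0] := eqVneq b 0.
  by apply: Span_base; split => //; exists a; rewrite b0 scale0r addr0.
apply: (span_line_chord y_neq0 y_off Fy BPy) => //.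
  by apply: addmx_sub; apply: scalemx_sub.
by rewrite polar_comb2 BPy Br0y !mulr0 addr0 add0r !mulf_neq0.
Qed.

Lemma plane_direction : exists t f, [/\ free3 (1 *: P + t *: r0) r0 f,
  BK (1 *: P + t *: r0) f = 0, TK (1 *: P + t *: r0) r0 f != 0 & BK r0 f != 0].
Proof.
have [g [Hb HTy Hpg Hrg]] := line_point_basis.
have [t [Ht0 Ht]] := avoid_square_root K4 (BK r0 g) Hpg.
pose x1 := 1 *: P + t *: r0.
pose f := BK x1 g *: y + (- (t * TK P r0 y)) *: g.
have Bx1y : BK x1 y = t * TK P r0 y by rewrite polar_comb2 BPy Br0y; ring.
exists t, f; split.
- move=> a b s E.
  have [Ea Eb _ Eg] : [/\ a = 0, a * t + b = 0, s * BK x1 g = 0 &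
      s * (- (t * TK P r0 y)) = 0].
    by apply: Hb; rewrite -E; apply/rowP => j; rewrite !mxE; ring.
  move/eqP: Eg; rewrite mulf_eq0 oppr_eq0 mulf_eq0 (negbTE Ht0) (negbTE HTy) /=.
  by rewrite orbF => /eqP Es; move: Eb; rewrite Ea Es mul0r add0r.
- by rewrite polar_linear Bx1y; ring.
- have -> : TK x1 r0 f = TK P r0 y * (BK P g - t ^+ 2 * BK r0 g).
    rewrite polar3_linear3 !polar3_linear1 polar_comb2 ![polar3 c r0 r0 _]polar3_diag.
    by rewrite Br0y; ring.
  by rewrite mulf_neq0 // subr_eq0 eq_sym.
by rewrite polar_linear Br0y mulr0 add0r !mulf_neq0 // oppr_eq0 mulf_neq0.
Qed.

(* The plane construction applied to x1 = P + t r0 and x2, both of the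
   form a P + b r0 with a != 0. *)
Lemma span_line_point : in_Span c (proj_point P) r0.
Proof.
have [t [f [Hfree Bx1f HT Hb0]]] := plane_direction.
have x1_on : ((1 *: P + t *: r0)%R <= A)%MS by apply: addmx_sub; apply: scalemx_sub.
apply: (plane_span Hfree (line_F x1_on) (line_F r0_on) (line_polar x1_on r0_on)
  (line_polar r0_on x1_on) Bx1f HT Hb0).
  by apply: span_line_comb; rewrite oner_eq0.
have -> : BK r0 f *: (1 *: P + t *: r0) + (- TK (1 *: P + t *: r0) r0 f) *: r0 =
  BK r0 f *: P + (BK r0 f * t - TK (1 *: P + t *: r0) r0 f) *: r0.
  by apply/rowP => j; rewrite !mxE; ring.
exact: span_line_comb.
Qed.

End LinePoint.

Lemma line_in_Gamma x : x != 0 -> (x <= A)%MS -> Gamma_pt c P x.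
Proof. by move=> Hx HxA; split => //; [exact: line_F | exact: line_polar]. Qed.

Lemma Gamma_in_Span x : Gamma_pt c P x -> in_Span c (proj_point P) x.
Proof.
move=> Gx; case: (Gx) => Hx0 _ _.
have [HxA|] := boolP (x <= A)%MS; last exact: Gamma_off_line.
have [y [Hy0 HyA HFy HPy]] := Gamma_point_off_line.
have [Bxy|Bxy] := eqVneq (BK x y) 0; last exact: span_line_chord HxA Hx0 Bxy.
have [HxP|HxP] := boolP (x <= P)%MS; last exact: span_line_point HxA HxP Bxy.
apply: Span_base; split => //; case/submxP: HxP => D ->; exists (D 0 0).
by rewrite {1}(mx11_scalar D) mul_scalar_mx.
Qed.

End SmoothCubicLine.

Unset Implicit Arguments.

Theorem mainTheorem4 (K : fieldType) (L : closedFieldType)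
  (iota : {rmorphism K -> L})
  (L_alg : forall z : L, exists p : {poly K}, p != 0 /\ root (map_poly iota p) z)
  (K4 : exists a b d e : K, uniq [:: a; b; d; e])
  (c : cubic K) (smooth : smooth_cubic (map_cubic iota c))
  (A : 'M[K]_(2,4)) (lineA : is_line A)
  (A_in_S : line_in_surface (map_cubic iota c) (map_mx iota A))
  (P : 'rV[K]_4) (P_nz : P != 0) (P_on : (P <= A)%MS)
  (P_unique : forall B : 'M[L]_(2,4), is_line B ->
      line_in_surface (map_cubic iota c) B ->
      (map_mx iota P <= B)%MS -> (B == map_mx iota A)%MS) :
  (forall x : 'rV[K]_4, x != 0 -> (x <= A)%MS -> Gamma_pt c P x) /\
  (forall x : 'rV[K]_4, Gamma_pt c P x -> in_Span c (proj_point P) x).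
Proof.
split; first exact (line_in_Gamma K4 A_in_S P_on).
exact (Gamma_in_Span K4 smooth lineA A_in_S P_nz P_on P_unique).
Qed.
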